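(* Let $n \ge s \ge 1$ be integers and let $p$ be an odd prime. Let \[ F_p(x) = \sum_{k=0}^{s-1} \binom{n}{k+1} G_{k+1}\, p^k\, x^{s-1-k} \in \mathbf{Z}[x]. \] Then \[ G_n \equiv \sum_{j=0}^{p-1} (-1)^j j^{n-s} F_p(j) \pmod{p^s}. \]
   Context: The Bernoulli numbers $B_k$ are defined by $\frac{t}{e^t-1} = \sum_{k\ge 0} \frac{B_k}{k!} t^k$. The Genocchi numbers are $G_k = 2(1-2^k)B_k$; they are integers. Here $0^0 = 1$. *)

From HB Require Import structures.
From mathcomp Require Import all_boot all_order all_algebra.
Set Implicit Arguments. Unset Strict Implicit. Unset Printing Implicit Defensive.
Import Order.TTheory GRing.Theory Num.Theory.
Local Open Scope ring_scope.

(* bern_list m = [:: B_0; ...; B_m], Bernoulli numbers with B_1 = -1/2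
   (the convention of t/(e^t-1)), via the standard recurrence
   B_0 = 1,  sum_{k=0}^{m} C(m+1,k) B_k = 0  for m >= 1. *)
Fixpoint bern_list (m : nat) : seq rat :=
  match m with
  | 0 => [:: 1]
  | m'.+1 =>
      let l := bern_list m' in
      rcons l (- (\sum_(k < m'.+1) ('C(m'.+2, k))%:R * l`_k) / (m'.+2)%:R)
  end.

Definition bernoulli (n : nat) : rat := (bern_list n)`_n.

(* Genocchi numbers G_k = 2 (1 - 2^k) B_k (rational-valued here; they are integers). *)
Definition genocchi (k : nat) : rat := 2 * (1 - 2 ^+ k) * bernoulli k.

Definition Fp (n s p : nat) (x : rat) : rat :=
  \sum_(k < s) ('C(n, k.+1))%:R * genocchi k.+1 * (p%:R) ^+ k * x ^+ (s - 1 - k).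

From HB Require Import structures.
From mathcomp Require Import all_boot all_order all_algebra.
From mathcomp Require Import ring lra zify.
Import Order.TTheory GRing.Theory Num.Theory.
Local Open Scope ring_scope.

(* We compute with exponential generating functions (egfs), represented by
   their coefficient sequences a : nat -> rat; the product of egfs becomes
   the binomial convolution (a ** b)_n = sum_k C(n,k) a_k b_(n-k).
   The defining recurrence of the Bernoulli numbers says B(t) e^t = B(t) + t;
   it yields the duplication formula B(2t) (e^t + 1) = 2 B(t), hence
   G(t) (e^t + 1) = 2t for the Genocchi egf G(t) = 2B(t) - 2B(2t).
   For odd m the alternating power sums S_m(r) = sum_(j<m) (-1)^j j^r have
   egf (e^(mt) + 1)/(e^t + 1), so G(mt) S_m(t) = m G(t), which is the
   multiplication formula
     G_(n+1) = sum_(k<=n) C(n+1,k+1) m^k G_(k+1) S_m(n-k).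
   Applied with m the odd denominator of G_(n+1) it shows that the Genocchi
   numbers are integers (2 B_n has odd denominator by an induction on the
   binomial expansion of G_n).  Applied with m = p, its first s terms form
   the sum over j in the theorem and the remaining terms carry the factor
   p^s. *)

Definition bconv (a b : nat -> rat) (n : nat) : rat :=
  \sum_(k < n.+1) ('C(n, k))%:R * a k * b (n - k)%N.

Local Notation "a ** b" := (bconv a b) (at level 40, left associativity).

Section BinomialConvolution.

Implicit Types (a b c : nat -> rat) (n : nat).

Lemma fact_neq0 n : (n`!)%:R != 0 :> rat.
Proof. by rewrite pnatr_eq0 -lt0n fact_gt0. Qed.

Lemma eq_fact_div n (x y : rat) : x / (n`!)%:R = y / (n`!)%:R -> x = y.
Proof. by apply: mulIf; rewrite invr_eq0 fact_neq0. Qed.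

(* If P and Q agree with the egfs of a and b up to degree n, then so does
   P * Q with the egf of a ** b: this transfers ring laws of polynomials to
   the convolution. *)
Lemma coefM_bconv (P Q : {poly rat}) a b n :
  (forall k, (k <= n)%N -> P`_k = a k / (k`!)%:R) ->
  (forall k, (k <= n)%N -> Q`_k = b k / (k`!)%:R) ->
  (P * Q)`_n = (a ** b) n / (n`!)%:R.
Proof.
move=> HP HQ; rewrite coefM /bconv mulr_suml; apply: eq_bigr => -[k hk] _ /=.
have hkn : (k <= n)%N by [].
rewrite HP // HQ ?leq_subr // -(bin_fact hkn) !natrM.
have hC : ('C(n, k))%:R != 0 :> rat by rewrite pnatr_eq0 -lt0n bin_gt0.
by field; rewrite hC !fact_neq0.
Qed.

Definition egf a (N : nat) : {poly rat} := \poly_(i < N) (a i / (i`!)%:R).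

Lemma coef_egf a n k : (k <= n)%N -> (egf a n.+1)`_k = a k / (k`!)%:R.
Proof. by move=> hk; rewrite coef_poly ltnS hk. Qed.

Lemma coef_egfM a b n k : (k <= n)%N ->
  (egf a n.+1 * egf b n.+1)`_k = (a ** b) k / (k`!)%:R.
Proof.
by move=> hk; apply: coefM_bconv => j hj; rewrite coef_egf // (leq_trans hj).
Qed.

Lemma bconvC a b n : (a ** b) n = (b ** a) n.
Proof. by apply: (@eq_fact_div n); rewrite -!(@coef_egfM _ _ n) // mulrC. Qed.

Lemma bconvA a b c n : ((a ** b) ** c) n = (a ** (b ** c)) n.
Proof.
apply: (@eq_fact_div n).
rewrite -(@coefM_bconv (egf a n.+1 * egf b n.+1) (egf c n.+1)); last 2 first.
- exact: coef_egfM.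
- exact: coef_egf.
rewrite -(@coefM_bconv (egf a n.+1) (egf b n.+1 * egf c n.+1)) ?mulrA //.
- exact: coef_egf.
- exact: coef_egfM.
Qed.

Lemma eq_bconv a a' b b' n : a =1 a' -> b =1 b' -> (a ** b) n = (a' ** b') n.
Proof. by move=> ha hb; apply: eq_bigr => k _; rewrite ha hb. Qed.

Lemma bconvDl a b c n : ((fun i => a i + b i) ** c) n = (a ** c) n + (b ** c) n.
Proof. by rewrite /bconv -big_split; apply: eq_bigr => k _ /=; ring. Qed.

Lemma bconvBl a b c n : ((fun i => a i - b i) ** c) n = (a ** c) n - (b ** c) n.
Proof. by rewrite /bconv -sumrB; apply: eq_bigr => k _ /=; ring. Qed.

Lemma bconvZl r a c n : ((fun i => r * a i) ** c) n = r * (a ** c) n.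
Proof. by rewrite /bconv mulr_sumr; apply: eq_bigr => k _ /=; ring. Qed.

Lemma bconvDr a b c n : (c ** (fun i => a i + b i)) n = (c ** a) n + (c ** b) n.
Proof. by rewrite bconvC bconvDl bconvC [(b ** _) _]bconvC. Qed.

Lemma bconvBr a b c n : (c ** (fun i => a i - b i)) n = (c ** a) n - (c ** b) n.
Proof. by rewrite bconvC bconvBl bconvC [(b ** _) _]bconvC. Qed.

(* The egf 1 (coefficients delta0) is the unit, the egf t has coefficients
   delta1, and e^t has constant coefficients 1. *)
Definition delta0 n : rat := (n == 0)%:R.
Definition delta1 n : rat := (n == 1)%:R.

Lemma bconv_delta0 a n : (a ** delta0) n = a n.
Proof.
rewrite /bconv big_ord_recr /= subnn /delta0 /= binn mulr1 mul1r big1 ?add0r //.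
by move=> k _; rewrite subn_eq0 leqNgt ltn_ord mulr0.
Qed.

Lemma bconv_exp a n :
  (a ** (fun _ => 1)) n = \sum_(k < n) ('C(n, k))%:R * a k + a n.
Proof.
rewrite /bconv big_ord_recr /= binn mulr1 mul1r; congr (_ + _).
by apply: eq_bigr => k _; rewrite mulr1.
Qed.

Lemma bconv_exp_exp n : ((fun _ => 1) ** (fun _ => 1)) n = 2 ^+ n.
Proof.
rewrite /bconv (_ : 2 = 1 + 1) // exprD1n.
by apply: eq_bigr => k _; rewrite !mulr1 expr1n.
Qed.

(* Dilation t |-> m t of an egf. *)
Definition dilate (m : rat) a n : rat := m ^+ n * a n.

Lemma bconv_dilate m a b n : (dilate m a ** dilate m b) n = m ^+ n * (a ** b) n.
Proof.
rewrite /bconv /dilate mulr_sumr; apply: eq_bigr => -[k hk] _ /=.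
by rewrite -[in m ^+ n](subnKC (ltnSE hk)) exprD; ring.
Qed.

Definition exp_plus1 n : rat := 1 + delta0 n.
Definition exp_minus1 n : rat := 1 - delta0 n.

Lemma bconv_exp_pm n : (exp_plus1 ** exp_minus1) n = 2 ^+ n - delta0 n.
Proof.
rewrite /exp_minus1 bconvBr bconv_delta0 /exp_plus1 bconvDl bconv_exp_exp.
rewrite bconvC bconv_delta0; ring.
Qed.

(* Multiplication by e^t + 1 is injective (its constant term 2 is a unit). *)
Lemma bconv_exp_plus1_inj a :
  (forall n, (a ** exp_plus1) n = 0) -> forall n, a n = 0.
Proof.
move=> H; elim/ltn_ind => n IH.
move: (H n); rewrite bconvDr bconv_delta0 bconv_exp big1 ?add0r; last first.
  by move=> -[k hk] _ /=; rewrite IH // mulr0.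
by move/eqP; rewrite -mulr2n mulrn_eq0 /= => /eqP.
Qed.

(* Multiplication by e^t - 1 = t (1 + t/2 + ...) is injective as well. *)
Lemma bconv_exp_minus1_inj a :
  (forall n, (a ** exp_minus1) n = 0) -> forall n, a n = 0.
Proof.
move=> H; elim/ltn_ind => n IH.
move: (H n.+1); rewrite bconvBr bconv_delta0 bconv_exp addrK big_ord_recr /=.
rewrite binSn big1 ?add0r; last by move=> -[k hk] _ /=; rewrite IH // mulr0.
by move/eqP; rewrite mulf_eq0 pnatr_eq0 /= => /eqP.
Qed.

End BinomialConvolution.

Section BernoulliGenocchi.

Lemma size_bern_list m : size (bern_list m) = m.+1.
Proof. by elim: m => [|m IH] //=; rewrite size_rcons IH. Qed.

Lemma nth_bern_list m k : (k <= m)%N -> (bern_list m)`_k = bernoulli k.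
Proof.
rewrite /bernoulli; elim: m => [|m IH] hk; first by move: hk; rewrite leqn0 => /eqP ->.
case: (ltnP k m.+1) => [hkm | hmk]; last by rewrite (@anti_leq k m.+1) ?hk.
by rewrite /= nth_rcons size_bern_list hkm IH.
Qed.

Lemma bernoulli_rec m : \sum_(k < m.+2) ('C(m.+2, k))%:R * bernoulli k = 0.
Proof.
rewrite big_ord_recr /= binSn.
have -> : bernoulli m.+1 =
    - (\sum_(k < m.+1) ('C(m.+2, k))%:R * (bern_list m)`_k) / (m.+2)%:R.
  by rewrite /bernoulli /= nth_rcons size_bern_list ltnn eqxx.
under [X in X + _]eq_bigr => k _ do rewrite -(@nth_bern_list m) ?leq_ord //.
by rewrite mulrC divfK ?addrN // pnatr_eq0.
Qed.

Lemma bernoulli_egf n : (bernoulli ** (fun _ => 1)) n = bernoulli n + delta1 n.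
Proof.
rewrite bconv_exp; case: n => [|[|m]].
- by rewrite big_ord0 /delta1 add0r addr0.
- by rewrite big_ord1 /delta1 /= mulr1 addrC.
- by rewrite bernoulli_rec /delta1 add0r addr0.
Qed.

(* Duplication formula: B(2t) (e^t + 1) = 2 B(t); checked after
   multiplying both sides by e^t - 1. *)
Lemma bernoulli_dup n : (dilate 2 bernoulli ** exp_plus1) n = 2 * bernoulli n.
Proof.
apply/eqP; rewrite -subr_eq0; apply/eqP; move: n.
apply: bconv_exp_minus1_inj => n.
rewrite bconvBl bconvA (@eq_bconv _ (dilate 2 bernoulli) _ (dilate 2 exp_minus1)) //;
  last by move=> i; rewrite bconv_exp_pm /dilate /exp_minus1 /delta0; case: i => [|i] /=; ring.
have B_exp_minus1 k : (bernoulli ** exp_minus1) k = delta1 k.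
  by rewrite /exp_minus1 bconvBr bconv_delta0 bernoulli_egf addrC addKr.
rewrite bconv_dilate bconvZl !B_exp_minus1 /delta1; case: n => [|[|n]] /=; ring.
Qed.

(* G(t) (e^t + 1) = 2t, since G(t) = 2 B(t) - 2 B(2t). *)
Lemma genocchi_egf n : (genocchi ** exp_plus1) n = 2 * delta1 n.
Proof.
rewrite (@eq_bconv _ (fun i => 2 * bernoulli i - 2 * dilate 2 bernoulli i) _ exp_plus1) //;
  last by move=> i; rewrite /genocchi /dilate; ring.
rewrite bconvBl !bconvZl bernoulli_dup /exp_plus1 bconvDr bconv_delta0 bernoulli_egf.
ring.
Qed.

Lemma genocchi0 : genocchi 0 = 0.
Proof. by rewrite /genocchi expr0 subrr mulr0 mul0r. Qed.

(* Binomial expansion G_n = sum_(k<n) C(n,k) 2^k B_k, read off from the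
   duplication formula. *)
Lemma genocchi_binom n : genocchi n = \sum_(k < n) ('C(n, k))%:R * 2 ^+ k * bernoulli k.
Proof.
have := bernoulli_dup n; rewrite /exp_plus1 bconvDr bconv_delta0 bconv_exp /dilate.
under eq_bigr => k _ do rewrite mulrA.
move=> dup; apply: (addIr (2 ^+ n * bernoulli n + 2 ^+ n * bernoulli n)).
by rewrite [RHS]addrA dup /genocchi; ring.
Qed.

End BernoulliGenocchi.

Section MultiplicationFormula.

Definition altsum (m r : nat) : rat := \sum_(j < m) (-1) ^+ j * (j%:R) ^+ r.

Lemma altsum_exp m n :
  (altsum m ** (fun _ => 1)) n = \sum_(j < m) (-1) ^+ j * (j.+1%:R) ^+ n.
Proof.
rewrite /bconv /altsum.
under eq_bigr => k _ do rewrite mulr1 mulr_sumr.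
rewrite exchange_big /=; apply: eq_bigr => j _.
rewrite -[j.+1]addn1 natrD exprD1n mulr_sumr; apply: eq_bigr => k _.
by rewrite mulr_natl -mulrnAr.
Qed.

(* For odd m, S_m(t) (e^t + 1) = e^(mt) + 1 by telescoping. *)
Lemma altsum_egf m n : odd m ->
  (altsum m ** exp_plus1) n = (m%:R) ^+ n + delta0 n.
Proof.
move=> hm; rewrite /exp_plus1 bconvDr bconv_delta0 altsum_exp /altsum -big_split /=.
pose f j := (-1) ^+ j * (j%:R : rat) ^+ n.
rewrite (eq_bigr (fun j : 'I_m => - (f j.+1 - f j))); last by move=> j _; rewrite /f exprS; ring.
rewrite sumrN -(big_mkord xpredT (fun j => f j.+1 - f j)) telescope_sumr // /f.
by rewrite -signr_odd hm expr0 mul1r /delta0 expr0n; ring.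
Qed.

(* S_m(0) = 1 for odd m: the constant term of S_m(t)(e^t + 1) is 2. *)
Lemma altsum0 m : odd m -> altsum m 0 = 1.
Proof.
move=> hm; have := @altsum_egf m 0 hm.
rewrite /bconv big_ord1 /exp_plus1 /delta0 /= bin0 expr0 mul1r => h.
by apply: (@mulIf _ 2); rewrite // mul1r -[X in _ = X]h; ring.
Qed.

(* G(mt) S_m(t) = m G(t) for odd m; checked after multiplying by e^t + 1. *)
Lemma genocchi_dilate m n : odd m ->
  (m%:R : rat) * genocchi n = (dilate m%:R genocchi ** altsum m) n.
Proof.
move=> hm; apply/eqP; rewrite eq_sym -subr_eq0; apply/eqP; move: n.
apply: bconv_exp_plus1_inj => n.
rewrite bconvBl bconvZl bconvA genocchi_egf.
rewrite (@eq_bconv _ (dilate m%:R genocchi) _ (dilate m%:R exp_plus1)) //;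
  last by move=> i; rewrite altsum_egf // /dilate /exp_plus1 /delta0; case: i => [|i] /=; ring.
by rewrite bconv_dilate genocchi_egf /delta1; case: n => [|[|n]] /=; ring.
Qed.

Definition mult_term (m n k : nat) : rat :=
  ('C(n.+1, k.+1))%:R * (m%:R) ^+ k * genocchi k.+1 * altsum m (n - k).

Lemma genocchi_mult m n : odd m -> genocchi n.+1 = \sum_(k < n.+1) mult_term m n k.
Proof.
move=> hm; have hm0 : (m%:R : rat) != 0 by rewrite pnatr_eq0; case: m hm.
apply: (mulfI hm0); rewrite genocchi_dilate // /bconv big_ord_recl /dilate genocchi0.
rewrite !mulr0 mul0r add0r mulr_sumr.
by apply: eq_bigr => k _ /=; rewrite /mult_term subSS exprS; ring.
Qed.

End MultiplicationFormula.

Section Integrality.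

Definition odd_denom (x : rat) : Prop :=
  exists (a : int) (d : nat), odd d /\ x * d%:R = a%:~R.

Lemma odd_denom_int x : x \is a Num.int -> odd_denom x.
Proof. by move=> /intrP[a ->]; exists a, 1%N; rewrite mulr1. Qed.

Lemma odd_denomD x y : odd_denom x -> odd_denom y -> odd_denom (x + y).
Proof.
move=> [a [d [hd ha]]] [b [e [he hb]]]; exists (a * e%:Z + b * d%:Z), (d * e)%N.
split; first by rewrite oddM hd he.
by rewrite natrM rmorphD !rmorphM /= !pmulrn -ha -hb; ring.
Qed.

Lemma odd_denomM x y : odd_denom x -> odd_denom y -> odd_denom (x * y).
Proof.
move=> [a [d [hd ha]]] [b [e [he hb]]]; exists (a * b), (d * e)%N.
split; first by rewrite oddM hd he.
by rewrite natrM rmorphM /= -ha -hb; ring.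
Qed.

Lemma odd_denom_sum (I : finType) (F : I -> rat) :
  (forall i, odd_denom (F i)) -> odd_denom (\sum_i F i).
Proof.
move=> H; apply: (big_ind odd_denom) => //; last exact: odd_denomD.
exact/odd_denom_int/int_num0.
Qed.

Lemma odd_denom_divn x e : odd e -> odd_denom (x * e%:R) -> odd_denom x.
Proof.
move=> he [a [d [hd ha]]]; exists a, (e * d)%N.
by rewrite oddM he hd natrM mulrA.
Qed.

(* 2 B_n has odd denominator: (1 - 2^n) (2 B_n) = G_n is, by the binomial
   expansion of G_n, an integer combination of the 2 B_k with k < n. *)
Lemma twice_bernoulli_odd_denom n : odd_denom (2 * bernoulli n).
Proof.
elim/ltn_ind: n => -[|n] IH.
  by apply: odd_denom_int; rewrite rpredM // (natr_int 2).
apply: (@odd_denom_divn _ (2 ^ n.+1 - 1)); first by rewrite oddB ?expn_gt0 // oddX.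
rewrite natrB ?expn_gt0 // natrX.
rewrite (_ : _ * _ = - genocchi n.+1); last by rewrite /genocchi; ring.
rewrite genocchi_binom -sumrN; apply: odd_denom_sum => -[[|k] hk] /=.
  by apply/odd_denom_int; rewrite bin0 expr0 !mulr1 rpredN.
rewrite (_ : - _ = (- ('C(n.+1, k.+1))%:R * 2 ^+ k) * (2 * bernoulli k.+1));
  last by rewrite exprS; ring.
apply: odd_denomM; last exact: IH.
by apply/odd_denom_int; rewrite rpredM ?rpredN ?rpredX ?natr_int.
Qed.

Lemma genocchi_odd_denom n : odd_denom (genocchi n).
Proof.
rewrite (_ : genocchi n = (1 - 2 ^+ n) * (2 * bernoulli n)); last by rewrite /genocchi; ring.
apply: odd_denomM; last exact: twice_bernoulli_odd_denom.
by apply/odd_denom_int; rewrite rpredB ?rpredX ?natr_int.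
Qed.

Lemma genocchi1 : genocchi 1 = 1.
Proof.
have := bernoulli_rec 0; rewrite !big_ord_recr big_ord0 /= add0r bin0 bin1 mulr1.
by rewrite /genocchi expr1; lra.
Qed.

Lemma altsum_int m r : altsum m r \is a Num.int.
Proof. by apply: rpred_sum => j _; rewrite rpredM ?rpredX ?rpredN ?natr_int. Qed.

Lemma mult_term_int m n k :
  genocchi k.+1 \is a Num.int -> mult_term m n k \is a Num.int.
Proof. by move=> hG; rewrite rpredM ?altsum_int // rpredM // rpredM ?rpredX ?natr_int. Qed.

(* The Genocchi numbers are integers: in the multiplication formula for
   G_(n+2) with m the odd denominator d of G_(n+2), every term is an
   integer by induction except the last one, d^(n+1) G_(n+2), which is an
   integer by the choice of d. *)
Lemma genocchi_int n : genocchi n \is a Num.int.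
Proof.
elim/ltn_ind: n => -[|[|n]] IH; first by rewrite genocchi0.
  by rewrite genocchi1.
have [a [d [hd ha]]] := genocchi_odd_denom n.+2.
rewrite (@genocchi_mult d n.+1 hd) big_ord_recr /=; apply: rpredD.
  by apply: rpred_sum => k _; apply/mult_term_int/IH; rewrite ltnS.
rewrite /mult_term subnn altsum0 // binn mul1r mulr1 exprSr -mulrA [d%:R * _]mulrC ha.
by rewrite rpredM ?rpredX ?natr_int ?intr_int.
Qed.

End Integrality.

Lemma mult_tail_dvd m n s :
  exists z : int, \sum_(s <= k < n.+1) mult_term m n k = z%:~R * (m%:R) ^+ s.
Proof.
have /intrP[z hz] : \sum_(s <= k < n.+1) ('C(n.+1, k.+1))%:R * (m%:R) ^+ (k - s)
    * genocchi k.+1 * altsum m (n - k) \is a Num.int.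
  apply: rpred_sum => k _.
  by rewrite rpredM ?altsum_int // rpredM ?genocchi_int // rpredM ?rpredX ?natr_int.
exists z; rewrite -hz mulr_suml; apply: eq_big_nat => k /andP[hsk _].
by rewrite /mult_term -[in m%:R ^+ k](subnK hsk) exprD; ring.
Qed.

Lemma alt_sum_Fp n s p : (s <= n.+1)%N ->
  \sum_(j < p) (-1) ^+ j * (j%:R : rat) ^+ (n.+1 - s) * Fp n.+1 s p j%:R
  = \sum_(k < s) mult_term p n k.
Proof.
move=> hsn; rewrite /Fp.
under eq_bigr => j _ do rewrite mulr_sumr.
rewrite exchange_big /=; apply: eq_bigr => -[k hk] _ /=.
rewrite /mult_term /altsum mulr_sumr; apply: eq_bigr => j _.
rewrite (_ : (n - k = (n.+1 - s) + (s - 1 - k))%N); last by lia.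
by rewrite exprD; ring.
Qed.

Theorem proposition2 (n s p : nat) (hs : (1 <= s)%N) (hsn : (s <= n)%N)
  (hp : prime p) (hodd : odd p) :
  exists z : int,
    genocchi n - \sum_(j < p) (-1) ^+ j * (j%:R : rat) ^+ (n - s) * Fp n s p j%:R
    = z%:~R * (p%:R : rat) ^+ s.
Proof.
case: n hsn => [|n] hsn; first by case: s hs hsn.
rewrite alt_sum_Fp // (@genocchi_mult p n hodd) -!(big_mkord xpredT (mult_term p n)).
rewrite (@big_cat_nat _ _ _ s) //= addrC addrK.
exact: mult_tail_dvd.
Qed.
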